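(* Let $\mathbf v=(v_1,\dots,v_m)$ and $\mathbf k=(k_1,\dots,k_m)$ be $m$-tuples of positive integers with $k_i\le v_i$ for all $i$, and put $v=\sum_i v_i$, $k=\sum_i k_i$, assuming $k\ge 2$. Then \[ C(\mathbf v,\mathbf k,2)\ \ge\ \left\lceil \frac{\binom{v}{2}-\sum_{i:\,k_i=1}\binom{v_i}{2}}{\binom{k}{2}}\right\rceil=\left\lceil \frac{\sum_{i:\,k_i\neq 1}\binom{v_i}{2}+\sum_{1\le i<j\le m}v_iv_j}{\binom{k}{2}}\right\rceil, \] with the convention $\binom{1}{2}=0$.
   Context: Let $X_1,\dots,X_m$ be pairwise disjoint sets with $|X_i|=v_i$. A block is an $m$-tuple of sets $(B_1,\dots,B_m)$ with $B_i\subseteq X_i$, $|B_i|=k_i$. An $m$-tuple of sets $(T_1,\dots,T_m)$ is $(\mathbf v,\mathbf k,2)$-admissible if $T_i\subseteq X_i$, $|T_i|\le k_i$ for all $i$ and $\sum_i|T_i|=2$; it is contained in a block if $T_i\subseteq B_i$ for all $i$. A ${\rm GC}(\mathbf v,\mathbf k,2)$ is a finite family (repetitions allowed) of blocks such that every admissible tuple is contained in at least one block; $C(\mathbf v,\mathbf k,2)$ is the minimum number of blocks of such a family. *)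

From mathcomp Require Import all_boot.
Set Implicit Arguments. Unset Strict Implicit. Unset Printing Implicit Defensive.

Definition pt (m : nat) (v : 'I_m -> nat) : finType := {i : 'I_m & 'I_(v i)}.

Definition part (m : nat) (v : 'I_m -> nat) (i : 'I_m) : {set pt v} :=
  [set x : pt v | tag x == i].

(* A block (B_1,...,B_m) with |B_i| = k_i, represented by the union of the B_i. *)
Definition is_block (m : nat) (v k : 'I_m -> nat) (B : {set pt v}) : Prop :=
  forall i : 'I_m, #|B :&: part v i| = k i.

(* (v,k,2)-admissible tuple (T_1,...,T_m), represented by the union of the T_i. *)
Definition admissible (m : nat) (v k : 'I_m -> nat) (T : {set pt v}) : Prop :=
  #|T| = 2 /\ forall i : 'I_m, #|T :&: part v i| <= k i.

Definition is_GC (m : nat) (v k : 'I_m -> nat) (F : seq {set pt v}) : Prop :=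
  (forall B, B \in F -> is_block k B) /\
  (forall T, admissible k T -> exists2 B, B \in F & T \subset B).

Definition ceil_div (a b : nat) : nat := (a + b - 1) %/ b.

(* A 2-subset of the ground set is non-admissible exactly when it lies inside
   a part X_i with k_i = 1 (a pair meets at most one part twice, and k_i >= 1
   for all i), so there are C(v,2) - sum_{k_i = 1} C(v_i,2) admissible pairs.
   A block contains exactly C(k,2) pairs and every admissible pair lies in
   some block of a GC, so double counting gives |F| * C(k,2) >= that number. *)

From mathcomp Require Import all_boot zify.

Set Implicit Arguments.
Unset Strict Implicit.
Unset Printing Implicit Defensive.

Lemma bin2D a b : 'C(a + b, 2) = 'C(a, 2) + 'C(b, 2) + a * b.
Proof. by rewrite -Vandermonde !big_ord_recr big_ord0 /= !bin0 !bin1 subn0; lia. Qed.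

Lemma bin2_sum_ord n (a : 'I_n -> nat) :
  'C(\sum_(i < n) a i, 2) =
  \sum_(i < n) 'C(a i, 2) + \sum_(i < n) \sum_(j < n | i < j) a i * a j.
Proof.
elim: n a => [|n IHn] a; first by rewrite !big_ord0.
have first_row :
    \sum_(j < n.+1 | 0 < j) a ord0 * a j = a ord0 * \sum_(j < n) a (lift ord0 j).
  by rewrite big_mkcond big_ord_recl big_distrr.
have other_rows (i : 'I_n) :
    \sum_(j < n.+1 | lift ord0 i < j) a (lift ord0 i) * a j
    = \sum_(j < n | i < j) a (lift ord0 i) * a (lift ord0 j).
  by rewrite big_mkcond big_ord_recl [RHS]big_mkcond.
rewrite !big_ord_recl first_row (eq_bigr _ (fun i _ => other_rows i)).
by rewrite bin2D IHn -!addnA; do 2 congr (_ + _); rewrite addnC.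
Qed.

Lemma subset_cardsI (T : finType) (A B : {set T}) :
  (A \subset B) = (#|A :&: B| == #|A|).
Proof. by rewrite -subsetIidl (subset_leqif_card (subsetIl A B)).2. Qed.

Lemma sum_nat_indicator (T : finType) (A : {pred T}) (P : pred T) :
  \sum_(x in A) (P x : nat) = #|[set x in A | P x]|.
Proof.
rewrite -sum1_card [RHS]big_mkcond [LHS]big_mkcond; apply: eq_bigr => x _.
by rewrite inE; case: (x \in A); case: (P x).
Qed.

Lemma ceil_div_leq a c n : 0 < c -> a <= n * c -> ceil_div a c <= n.
Proof. by move=> c_gt0 le_a; rewrite /ceil_div -ltnS ltn_divLR // mulSn; lia. Qed.

Section Parts.

Variables (m : nat) (v : 'I_m -> nat).

Lemma card_partition_parts (B : {set pt v}) :
  #|B| = \sum_(i < m) #|B :&: part v i|.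
Proof.
rewrite -sum1_card (partition_big (fun x : pt v => tag x) xpredT) //=.
apply: eq_bigr => i _; rewrite -sum1_card; apply: eq_bigl => x.
by rewrite !inE andbC.
Qed.

Lemma card_part i : #|part v i| = v i.
Proof.
have -> : part v i = [set Tagged (fun j => 'I_(v j)) t | t : 'I_(v i)].
  apply/setP => x; rewrite inE; apply/eqP/imsetP => [|[t _ ->]] //.
  by case: x => j t /= <-; exists t.
by rewrite card_imset ?card_ord //; apply: eq_from_Tagged.
Qed.

Lemma card_pt : #|pt v| = \sum_(i < m) v i.
Proof.
rewrite -cardsT card_partition_parts; apply: eq_bigr => i _.
by rewrite setTI card_part.
Qed.

Lemma subset_part_uniq (T : {set pt v}) i j :
  T != set0 -> T \subset part v i -> T \subset part v j -> i = j.
Proof.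
case/set0Pn => x xT /subsetP/(_ x xT) + /subsetP/(_ x xT).
by rewrite !inE => /eqP <- /eqP.
Qed.

Section Admissible.

Variable k : 'I_m -> nat.

Definition admissible_pairs : {set {set pt v}} :=
  [set T : {set pt v} | (#|T| == 2) && [forall i, #|T :&: part v i| <= k i]].

Lemma admissible_pairsP (T : {set pt v}) :
  reflect (admissible k T) (T \in admissible_pairs).
Proof.
by rewrite inE; apply: (iffP andP) => [[/eqP T2 /forallP] | [-> /forallP]].
Qed.

Lemma card_pairs_in_block (B : {set pt v}) : is_block k B ->
  #|[set T : {set pt v} | T \subset B & #|T| == 2]| = 'C(\sum_(i < m) k i, 2).
Proof.
move=> blockB; rewrite cards_draws card_partition_parts.
by under eq_bigr do rewrite blockB.
Qed.

Lemma card_admissible_pairs_GC (F : seq {set pt v}) : is_GC k F ->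
  #|admissible_pairs| <= size F * 'C(\sum_(i < m) k i, 2).
Proof.
case=> blocks covers.
have covered T : T \in admissible_pairs -> 1 <= \sum_(B <- F) (T \subset B).
  by case/admissible_pairsP/covers => B BF TB; rewrite (big_rem B) //= TB.
apply: (@leq_trans (\sum_(T in admissible_pairs) \sum_(B <- F) (T \subset B))).
  by rewrite -sum1_card; apply: leq_sum.
rewrite exchange_big /= -[size F]count_predT -sum1_count big_distrl /= big_seq [leqRHS]big_seq.
apply: leq_sum => B BF; rewrite mul1n -(card_pairs_in_block (blocks B BF)).
rewrite sum_nat_indicator subset_leq_card //; apply/subsetP => T.
by rewrite !inE => /andP [/andP [-> _] ->].
Qed.

Hypothesis k_gt0 : forall i, 0 < k i.

Lemma admissible_or_in_unit_part (T : {set pt v}) : #|T| = 2 ->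
  (T \in admissible_pairs) + \sum_(i < m | k i == 1) (T \subset part v i) = 1.
Proof.
move=> T2; rewrite inE T2 eqxx /=.
have subset_part i : (T \subset part v i) = (#|T :&: part v i| == 2).
  by rewrite subset_cardsI T2.
have le2 i : #|T :&: part v i| <= 2 by rewrite -T2 subset_leq_card ?subsetIl.
case: forallP => [adm | /forallP/forallPn [i]].
  rewrite big1 // => i /eqP ki; rewrite subset_part.
  by rewrite ltn_eqF // ltnS -ki adm.
rewrite -ltnNge => lt_k.
have ki : k i == 1 by rewrite eqn_leq k_gt0 -ltnS (leq_trans lt_k (le2 i)).
have Ti : T \subset part v i.
  by rewrite subset_part eqn_leq le2; move: lt_k; rewrite (eqP ki).
rewrite (bigD1 i) //= Ti big1 // => j /andP [_ ji].
apply/eqP; rewrite eqb0; apply: contraNN ji => Tj.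
by rewrite (@subset_part_uniq T j i) // -card_gt0 T2.
Qed.

Lemma card_admissible_pairs :
  #|admissible_pairs| + \sum_(i < m | k i == 1) 'C(v i, 2)
  = 'C(\sum_(i < m) v i, 2).
Proof.
pose pairs := [set T : {set pt v} | #|T| == 2].
have -> : #|admissible_pairs| = \sum_(T in pairs) (T \in admissible_pairs).
  rewrite sum_nat_indicator; apply: eq_card => T.
  by rewrite !inE; case: (_ == 2).
have pairs_in_part i : 'C(v i, 2) = \sum_(T in pairs) (T \subset part v i).
  rewrite -(card_part i) -cards_draws sum_nat_indicator; apply: eq_card => T.
  by rewrite !inE andbC.
rewrite (eq_bigr _ (fun i _ => pairs_in_part i)) exchange_big -big_split /=.
rewrite -card_pt -card_draws -sum1_card; apply: eq_bigr => T.
by rewrite inE => /eqP /admissible_or_in_unit_part ->.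
Qed.

End Admissible.

End Parts.

Theorem proposition3p7 (m : nat) (v k : 'I_m -> nat)
  (hv : forall i, 0 < v i) (hk : forall i, 0 < k i) (hkv : forall i, k i <= v i)
  (hk2 : 2 <= \sum_(i < m) k i) :
  let V := \sum_(i < m) v i in
  let K := \sum_(i < m) k i in
  ceil_div ('C(V, 2) - \sum_(i < m | k i == 1) 'C(v i, 2)) 'C(K, 2)
  = ceil_div (\sum_(i < m | k i != 1) 'C(v i, 2)
              + \sum_(i < m) \sum_(j < m | i < j) v i * v j) 'C(K, 2)
  /\
  (forall F : seq {set pt v}, is_GC k F ->
     ceil_div ('C(V, 2) - \sum_(i < m | k i == 1) 'C(v i, 2)) 'C(K, 2) <= size F).
Proof.
move=> V K; split.
  by rewrite /V bin2_sum_ord (bigID (fun i => k i == 1)) /= -addnA addKn.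
move=> F GC_F; apply: ceil_div_leq; first by rewrite bin_gt0.
by rewrite -(card_admissible_pairs v hk) addnK card_admissible_pairs_GC.
Qed.
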